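(* Let $G$ be a connected chordal graph and $X\subseteq V(G)$ a vertex subset such that $G[X]$ is connected. Then there is a bijection $f$ from the set of connected components of $G[N_G(X)]$ to the set of connected components of $G-X$ such that a connected component $C$ of $G[N_G(X)]$ is contained in a connected component $H$ of $G-X$ if and only if $H=f(C)$.
   Context: A graph is chordal if it has no induced cycle of length at least $4$. For $X\subseteq V(G)$, $N_G(X)=(\bigcup_{v\in X}N_G(v))\setminus X$. *)

(* A simple graph is a symmetric irreflexive relation e on a finType T. *)
From mathcomp Require Import all_boot.
Set Implicit Arguments. Unset Strict Implicit. Unset Printing Implicit Defensive.

Section Graphs.
Variable T : finType.
Variable e : rel T.

Definition induced_rel (S : {set T}) : rel T :=
  [rel x y | [&& x \in S, y \in S & e x y]].

Definition comp_of (S : {set T}) (x : T) : {set T} :=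
  [set y | connect (induced_rel S) x y].

Definition components (S : {set T}) : {set {set T}} :=
  [set comp_of S x | x in S].

Definition connected_on (S : {set T}) : Prop :=
  S != set0 /\ forall x y, x \in S -> y \in S -> connect (induced_rel S) x y.

Definition nbhd (X : {set T}) : {set T} :=
  [set y | (y \notin X) && [exists x in X, e x y]].

Definition induced_long_cycle (s : seq T) : Prop :=
  [/\ 3 < size s, uniq s, cycle e s &
      forall x y, x \in s -> y \in s -> e x y -> (y == next s x) || (x == next s y)].

Definition chordal : Prop := forall s : seq T, ~ induced_long_cycle s.

End Graphs.

(** Suppose two vertices of N(X) lie in one component of G - X but in different
    components of G[N(X)], the first one in C.  A shortest walk in G - X from C to
    N(X) \ C is an induced path P of length at least 2 whose inner vertices avoid
    N(X).  Its ends have neighbours in X, and a shortest path in G[X] from the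
    neighbours of one end to those of the other closes P into an induced cycle of
    length at least 4.  So in a chordal graph each component of G - X meets N(X)
    in at most one component of G[N(X)], and it meets N(X) at all since G is
    connected; the bijection sends a component of G[N(X)] to the component of
    G - X containing it. *)

From mathcomp Require Import all_boot zify.
From Stdlib Require Import Classical.
Set Implicit Arguments. Unset Strict Implicit. Unset Printing Implicit Defensive.

Section ChordalSeparator.
Variable T : finType.
Variable e : rel T.
Hypothesis e_sym : symmetric e.
Hypothesis e_irr : irreflexive e.

Lemma comp_of_refl (S : {set T}) x : x \in comp_of e S x.
Proof. by rewrite inE connect0. Qed.

Lemma comp_of_eq (S : {set T}) x y : y \in comp_of e S x -> comp_of e S y = comp_of e S x.
Proof.
have S_sym : connect_sym (induced_rel e S).
  by apply: sym_connect_sym => u v; rewrite /induced_rel /= e_sym andbCA.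
by rewrite inE => xy; apply/setP => z; rewrite !inE (same_connect S_sym xy).
Qed.

Lemma comp_of_subset (S : {set T}) x : x \in S -> comp_of e S x \subset S.
Proof.
move=> xS; apply/subsetP => y; rewrite inE => /connectP [q].
elim: q x xS => [|z q IHq] x xS /=; first by move=> _ ->.
by move=> /andP [/and3P [_ zS _]]; apply: IHq.
Qed.

Lemma comp_of_mono (S1 S2 : {set T}) x : S1 \subset S2 -> comp_of e S1 x \subset comp_of e S2 x.
Proof.
move=> /subsetP S12; apply/subsetP => y; rewrite !inE; apply: connect_sub => u v.
by move=> /and3P [uS vS uv]; apply: connect1; rewrite /induced_rel /= uv !S12.
Qed.

Lemma comp_of_adj (S : {set T}) c x y : x \in S -> y \in S -> e x y ->
  x \in comp_of e S c -> y \in comp_of e S c.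
Proof.
move=> xS yS xy; rewrite !inE => cx.
by apply: connect_trans cx (connect1 _); rewrite /induced_rel /= xS yS.
Qed.

Lemma nbhdP (X : {set T}) y :
  reflect (y \notin X /\ exists2 x, x \in X & e x y) (y \in nbhd e X).
Proof. by rewrite inE; apply: (iffP andP) => -[yX /exists_inP]. Qed.

Lemma nbhd_subset_compl (X : {set T}) : nbhd e X \subset ~: X.
Proof. by apply/subsetP => y /nbhdP [yX _]; rewrite inE. Qed.

Lemma path_enters_nbhd (X : {set T}) a q : a \notin X -> path e a q -> last a q \in X ->
  exists2 v, v \in nbhd e X & connect (induced_rel e (~: X)) a v.
Proof.
elim: q a => [|b q IHq] a aX /=; first by rewrite (negbTE aX).
move=> /andP [ab b_path] q_last; case: (boolP (b \in X)) => bX.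
  by exists a; [apply/nbhdP; split=> //; exists b; rewrite // e_sym | exact: connect0].
have [v vN bv] := IHq b bX b_path q_last; exists v => //.
by apply: connect_trans bv; apply: connect1; rewrite /induced_rel /= !inE aX bX.
Qed.

Definition walk (S : {set T}) (p : nat -> T) (k : nat) : Prop :=
  (forall i, i <= k -> p i \in S) /\ (forall i, i < k -> e (p i) (p i.+1)).

Lemma walk_of_connect (S : {set T}) x y : x \in S -> connect (induced_rel e S) x y ->
  exists p k, [/\ walk S p k, p 0 = x & p k = y].
Proof.
move=> xS /connectP [q /(pathP x) q_path ->].
exists (nth x (x :: q)), (size q); split=> //; last by rewrite (last_nth x).
by split=> [[|i] iq //|i iq]; have /and3P [] := q_path i iq.
Qed.

Definition induced_path (p : nat -> T) (k : nat) : Prop :=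
  forall i j, i < j -> j <= k -> p i != p j /\ (e (p i) (p j) -> j = i.+1).

Definition induced_AB_path (S A B : {set T}) (q : nat -> T) (n : nat) : Prop :=
  [/\ walk S q n, forall i, i <= n -> (q i \in A) = (i == 0),
      forall i, i <= n -> (q i \in B) = (i == n) & induced_path q n].

Lemma walk_prefix S p k i : walk S p k -> i <= k -> walk S p i.
Proof. by move=> [pS pe] ik; split=> j ji; [apply: pS | apply: pe]; lia. Qed.

Lemma walk_suffix S p k i : walk S p k -> i <= k -> walk S (fun m => p (i + m)) (k - i).
Proof.
move=> [pS pe] ik; split=> [j jk|j jk]; first by apply: pS; lia.
by rewrite addnS; apply: pe; lia.
Qed.

Lemma walk_splice S p k i j : walk S p k -> i.+1 < j <= k -> e (p i) (p j) ->
  walk S (fun m => p (if m <= i then m else m + (j - i.+1))) (k - (j - i.+1)).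
Proof.
move=> [pS pe] /andP [ij jk] eij; split=> [m mk|m mk] /=.
  by apply: pS; case: ifP; lia.
case: (ltngtP m i) => [mi|im|->]; first by apply: pe; lia.
- by rewrite addSn; apply: pe; lia.
- by have -> : i.+1 + (j - i.+1) = j by lia.
Qed.

Lemma induced_AB_path_of_walk (S A B : {set T}) p k : walk S p k -> p 0 \in A -> p k \in B ->
  exists q n, induced_AB_path S A B q n.
Proof.
(* A shortest such walk works: any violation yields a shorter walk by taking a
   suffix, a prefix, or by jumping along a chord. *)
elim/ltn_ind: k p => k IH p Wp pA pB.
case: (classic (exists q n, induced_AB_path S A B q n)) => [//|no_path].
have shorter q n : n < k -> walk S q n -> q 0 \in A -> q n \in B -> False.
  by move=> nk Wq qA qB; apply: no_path; apply: IH nk q Wq qA qB.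
have notA i : 0 < i <= k -> p i \notin A.
  move=> /andP [i0 ik]; apply/negP => piA.
  apply: (shorter _ (k - i) _ (walk_suffix Wp ik)); rewrite ?addn0 ?subnKC //; lia.
have notB i : i < k -> p i \notin B.
  by move=> ik; apply/negP; apply: shorter ik (walk_prefix Wp (ltnW ik)) pA.
have no_chord i j : i.+1 < j <= k -> ~~ e (p i) (p j).
  move=> ijk; apply/negP => eij; have [ij jk] := andP ijk.
  apply: (shorter _ _ _ (walk_splice Wp ijk eij)); rewrite /= ?leq0n //; first lia.
  by rewrite leqNgt (_ : i < _); [have -> : k - (j - i.+1) + (j - i.+1) = k by lia | lia].
exfalso; apply: no_path; exists p, k; split=> //.
- move=> i ik; case: (posnP i) => [-> //|i0].
  by apply/negbTE/notA; rewrite i0 ik.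
- by move=> i ik; case: (ltngtP i k) ik => [ik _|//|-> _] //; apply/negbTE/notB.
- move=> i j ij jk; split.
  + apply/eqP => pij; case: (ltngtP j k) jk => [jk _|//|jk _].
    * by have := no_chord i j.+1; rewrite ltnS ij jk pij (proj2 Wp) // => /(_ isT).
    * by move: (notB i (leq_trans ij (eq_leq jk))); rewrite pij jk pB.
  + move=> eij; apply/eqP; rewrite eqn_leq ij andbT leqNgt.
    by apply/negP => ij'; move: (no_chord i j); rewrite ij' jk eij => /(_ isT).
Qed.

Lemma next_mkseq (h : nat -> T) n i : uniq (mkseq h n) -> i < n ->
  next (mkseq h n) (h i) = h (if i.+1 < n then i.+1 else 0).
Proof.
move=> s_uniq lt_in; have hi : h i = nth (h 0) (mkseq h n) i by rewrite nth_mkseq.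
rewrite next_nth {1}hi mem_nth ?size_mkseq // hi index_uniq ?size_mkseq //.
case: n s_uniq lt_in hi => // n _ lt_in _; rewrite /mkseq -add1n iotaD map_cat /=.
case: ifP => [lt_i1n|ge_i1n]; first by rewrite (nth_map 0) ?nth_iota ?size_iota //; lia.
by rewrite nth_default // size_map size_iota; lia.
Qed.

Lemma induced_long_cycle_mkseq (h : nat -> T) n : 3 < n ->
  (forall i, i.+1 < n -> e (h i) (h i.+1)) -> e (h n.-1) (h 0) ->
  (forall i j, i < j -> j < n ->
     h i != h j /\ (e (h i) (h j) -> j = i.+1 \/ (i = 0 /\ j = n.-1))) ->
  induced_long_cycle e (mkseq h n).
Proof.
move=> n3 h_edge h_close h_ind; set s := mkseq h n.
have s_uniq : uniq s.
  apply/mkseq_uniqP => i j; rewrite !inE => lt_in lt_jn hij.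
  case: (ltngtP i j) => [ij|ji|//]; last by have [] := h_ind j i ji lt_in; rewrite hij eqxx.
  by have [] := h_ind i j ij lt_jn; rewrite hij eqxx.
have memsP x : x \in s -> exists2 i, i < n & x = h i.
  by move=> /mapP [i]; rewrite mem_iota add0n; exists i.
split; rewrite ?size_mkseq //.
- apply: (sub_in_cycle (e := frel (next s))) (allss s) (cycle_next s_uniq).
  move=> x y /memsP [i lt_in ->] _ /eqP <-; rewrite next_mkseq //.
  by case: ifP => [/h_edge //|ge_i1n]; have -> : i = n.-1 by lia.
move=> x y /memsP [i lt_in ->] /memsP [j lt_jn ->] eij; rewrite !next_mkseq //.
case: (ltngtP i j) => [ij|ji|ij]; last by rewrite ij e_irr in eij.
- have [_ /(_ eij) [ji1|[i0 jn1]]] := h_ind i j ij lt_jn; subst.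
    by rewrite lt_jn eqxx.
  by rewrite prednK ?ltnn ?eqxx ?orbT //; lia.
- rewrite e_sym in eij; have [_ /(_ eij) [ij1|[j0 in1]]] := h_ind j i ji lt_in; subst.
    by rewrite lt_in eqxx orbT.
  by rewrite prednK ?ltnn ?eqxx //; lia.
Qed.

Lemma induced_long_cycle_glue (S : {set T}) p k g m :
  1 < k + m -> walk S p k -> walk (~: S) g m -> induced_path p k -> induced_path g m ->
  e (p k) (g 0) -> e (g m) (p 0) ->
  (forall i j, i <= k -> j <= m -> e (p i) (g j) -> (i = k /\ j = 0) \/ (i = 0 /\ j = m)) ->
  induced_long_cycle e (mkseq (fun t => if t <= k then p t else g (t - k.+1)) (k + m + 2)).
Proof.
move=> km [pS pe] [gS ge] p_ind g_ind e_pg e_gp cross.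
apply: induced_long_cycle_mkseq => [|t tn|/=|i j ij jn] /=; first lia.
- case: (ltngtP t k) => [tk|kt|->]; first exact: pe.
    by rewrite (_ : t.+1 - k.+1 = (t - k.+1).+1); [apply: ge|]; lia.
  by rewrite subnn.
- by rewrite ifF ?leq0n; [have -> : (k + m + 2).-1 - k.+1 = m by lia | lia].
case: (leqP j k) => jk.
  by rewrite (leq_trans (ltnW ij) jk); have [? edge] := p_ind i j ij jk; split=> // /edge; left.
case: (leqP i k) => ik.
- split.
    apply/negP=> /eqP pg; have gjS : g (j - k.+1) \in ~: S by apply: gS; lia.
    by rewrite -pg inE pS in gjS.
  by move=> /cross [] //; lia.
- have [g_neq g_edge] := g_ind (i - k.+1) (j - k.+1) ltac:(lia) ltac:(lia).
  by split=> // /g_edge; lia.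
Qed.

Lemma nbhd_comps_induced_path (X : {set T}) c1 c2 :
  c1 \in nbhd e X -> c2 \in nbhd e X -> c2 \in comp_of e (~: X) c1 ->
  c2 \notin comp_of e (nbhd e X) c1 ->
  exists p k, [/\ walk (~: X) p k, induced_path p k, 1 < k &
                  forall i, i <= k -> (p i \in nbhd e X) = (i == 0) || (i == k)].
Proof.
move=> c1N c2N; rewrite [c2 \in comp_of _ _ _]inE => c12 c2C1.
set N := nbhd e X in c1N c2N c2C1 *; set C1 := comp_of e N c1 in c2C1 *.
have c1Y : c1 \in ~: X := subsetP (nbhd_subset_compl X) _ c1N.
have [p0 [k0 [Wp0 p00 p0k]]] := walk_of_connect c1Y c12.
have p00C1 : p0 0 \in C1 by rewrite p00 comp_of_refl.
have p0kB : p0 k0 \in N :\: C1 by rewrite p0k inE c2C1 c2N.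
have [p [k [Wp pC1 pNC1 p_ind]]] := induced_AB_path_of_walk Wp0 p00C1 p0kB.
have p0N : p 0 \in N by apply: subsetP (comp_of_subset c1N) _ _; rewrite pC1.
have /setDP [pkN pkC1] : p k \in N :\: C1 by rewrite pNC1.
exists p, k; split=> //.
- rewrite ltnNge; apply: contra pkC1.
  case: k Wp pC1 pkN {pNC1 p_ind} => [|[|//]] Wp pC1 pkN _; first by rewrite pC1.
  by apply: comp_of_adj p0N pkN ((proj2 Wp) 0 isT) _; rewrite pC1.
move=> i ik; apply/idP/orP => [piN|[/eqP -> //|/eqP -> //]].
by case: (boolP (p i \in C1)) => piC1; [left; rewrite -pC1 | right; rewrite -pNC1 // inE piC1].
Qed.

Lemma comp_of_compl_nbhd (X : {set T}) c1 c2 : chordal e -> connected_on e X ->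
  c1 \in nbhd e X -> c2 \in nbhd e X -> c2 \in comp_of e (~: X) c1 ->
  c2 \in comp_of e (nbhd e X) c1.
Proof.
move=> chordalG [_ connX] c1N c2N c12; apply/negPn/negP => c2C1.
have [p [k [Wp p_ind k2 pN]]] := nbhd_comps_induced_path c1N c2N c12 c2C1.
have p0N : p 0 \in nbhd e X by rewrite pN.
have pkN : p k \in nbhd e X by rewrite pN ?eqxx ?orbT.
have [/nbhdP [_ [x1 x1X x1pk]] /nbhdP [_ [x2 x2X x2p0]]] := conj pkN p0N.
have [g0 [m0 [Wg0 g00 g0m]]] := walk_of_connect x1X (connX x1 x2 x1X x2X).
have g00A : g0 0 \in [set x | e (p k) x] by rewrite g00 inE e_sym.
have g0mB : g0 m0 \in [set x | e (p 0) x] by rewrite g0m inE e_sym.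
have [g [m [Wg gA gB g_ind]]] := induced_AB_path_of_walk Wg0 g00A g0mB.
apply: (chordalG _ (induced_long_cycle_glue _ Wp _ p_ind g_ind _ _ _)).
- by rewrite (leq_trans k2) ?leq_addr.
- by rewrite setCK.
- by have := gA 0 (leq0n m); rewrite inE.
- by have := gB m (leqnn m); rewrite inE e_sym eqxx.
move=> i j ik jm epg.
have /orP [] : (i == 0) || (i == k).
  rewrite -pN //; apply/nbhdP; split; first by rewrite -in_setC; apply: (proj1 Wp).
  by exists (g j); [apply: (proj1 Wg) | rewrite e_sym].
- move=> /eqP i0; subst i; right; split=> //; apply/eqP.
  by rewrite -gB // inE.
- move=> /eqP i_k; subst i; left; split=> //; apply/eqP.
  by rewrite -gA // inE.
Qed.

End ChordalSeparator.

Theorem lemma2p1 (T : finType) (e : rel T) (e_sym : symmetric e) (e_irr : irreflexive e)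
  (X : {set T}) :
  connected_on e [set: T] -> chordal e -> connected_on e X ->
  exists f : {set T} -> {set T},
    [/\ {in components e (nbhd e X), forall C : {set T}, f C \in components e (~: X)},
        {in components e (nbhd e X) &, injective f},
        {in components e (~: X), forall H : {set T}, exists2 C, C \in components e (nbhd e X) & f C = H} &
        {in components e (nbhd e X), forall C : {set T},
          {in components e (~: X), forall H : {set T}, C \subset H <-> H = f C}}].
Proof.
move=> connG chordalG connX.
have NY := nbhd_subset_compl e X.
pose f (C : {set T}) := if [pick x in C] is Some x then comp_of e (~: X) x else set0.
have fE c : c \in nbhd e X -> f (comp_of e (nbhd e X) c) = comp_of e (~: X) c.
  move=> cN; rewrite /f; case: pickP => [x cx|/(_ c)]; last by rewrite comp_of_refl.
  exact/(comp_of_eq e_sym)/(subsetP (comp_of_mono e c NY)).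
exists f; split.
- by move=> _ /imsetP [c cN ->]; rewrite fE // imset_f // (subsetP NY).
- move=> _ _ /imsetP [c1 c1N ->] /imsetP [c2 c2N ->]; rewrite !fE // => Y12.
  apply/esym/(comp_of_eq e_sym)/(comp_of_compl_nbhd e_sym e_irr chordalG connX c1N c2N).
  by rewrite Y12 comp_of_refl.
- move=> _ /imsetP [y + ->]; rewrite inE => yX.
  have [x xX] := set0Pn _ connX.1.
  have /connectP [q yx_path x_last] := connG.2 y x (in_setT y) (in_setT x).
  have sub_e : subrel (induced_rel e [set: T]) e by move=> u v /and3P [].
  have [|v vN yv] := path_enters_nbhd e_sym yX (sub_path sub_e yx_path); first by rewrite -x_last.
  exists (comp_of e (nbhd e X) v); first exact: imset_f.
  by rewrite fE //; apply: (comp_of_eq e_sym); rewrite inE.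
- move=> _ /imsetP [c cN ->] _ /imsetP [y yY ->]; rewrite fE //; split.
  + by move=> /subsetP /(_ c (comp_of_refl e _ c)) /(comp_of_eq e_sym) ->.
  + by move=> ->; apply: comp_of_mono.
Qed.
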